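(* Let $\mathcal{Y}=\{0,1\}$, let $y_t\in\{0,1\}$ and $v_t\in[0,1]$ for $t\in T=\{1,\dots,n\}$, and let $s\colon\{0,1\}\times[0,1]\to[-1,1]$ be a consistent scoring function for the mean, i.e. $\mathbb{E}_{\phi}[s(\cdot,p)]\le\mathbb{E}_\phi[s(\cdot,c)]$ for every $p,c\in[0,1]$ where $\phi$ is Bernoulli($p$). For $\gamma\in\{v_t:t\in T\}$ let $T_\gamma=\{t:v_t=\gamma\}$. Then $$\sup_{\sigma\colon[0,1]\to[0,1]}\sum_{t\in T}\big(s(y_t,v_t)-s(y_t,\sigma(v_t))\big)\ \le\ 4\sum_{\gamma\in\{v_t:t\in T\}}|T_\gamma|\,\Big|\frac1{|T_\gamma|}\sum_{t\in T_\gamma}y_t-\gamma\Big|.$$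
   Context: $\mathbb{E}_\phi[f]=\phi(\{0\})f(0)+\phi(\{1\})f(1)$ for a distribution $\phi$ on $\{0,1\}$; Bernoulli($p$) puts mass $p$ on $1$. *)

From HB Require Import structures.
From mathcomp Require Import all_boot all_order all_algebra.
From mathcomp Require Import reals.
Set Implicit Arguments. Unset Strict Implicit. Unset Printing Implicit Defensive.
Import Order.TTheory GRing.Theory Num.Theory.
Local Open Scope ring_scope.

(* Y = {0,1} is encoded by bool (false = 0, true = 1). *)

Definition bern_expect (R : ringType) (p : R) (f : bool -> R) : R :=
  (1 - p) * f false + p * f true.

Definition consistent_mean (R : realFieldType) (s : bool -> R -> R) : Prop :=
  forall p c : R, 0 <= p <= 1 -> 0 <= c <= 1 ->
    bern_expect p (fun y => s y p) <= bern_expect p (fun y => s y c).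

Definition level_set (R : eqType) (n : nat) (v : 'I_n -> R) (g : R) : {set 'I_n} :=
  [set t | v t == g].

Definition values_of (R : eqType) (n : nat) (v : 'I_n -> R) : seq R :=
  undup [seq v t | t <- enum 'I_n].

From HB Require Import structures.
From mathcomp Require Import all_boot all_order all_algebra.
From mathcomp Require Import reals.
From mathcomp Require Import ring lra.
Set Implicit Arguments. Unset Strict Implicit. Unset Printing Implicit Defensive.
Import Order.TTheory GRing.Theory Num.Theory.
Local Open Scope ring_scope.

(* Group the rounds by forecast value.  On the level set [T_g] the total
   regret of relabelling [g] as [c] is [|T_g|] times the expected regret
   under Bernoulli(a), [a] the empirical frequency of ones on [T_g].  That
   expectation is affine in [a]; it is nonpositive at [a = g] by consistency,
   and its slope is at most 4 since [s] takes values in [[-1,1]]. *)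

Lemma bern_expect_shift (R : comNzRingType) (a g : R) (f : bool -> R) :
  bern_expect a f = bern_expect g f + (a - g) * (f true - f false).
Proof. rewrite /bern_expect; ring. Qed.

Lemma consistent_regret_le (R : realFieldType) (s : bool -> R -> R) (a g c : R) :
  consistent_mean s ->
  (forall (b : bool) (p : R), 0 <= p <= 1 -> -1 <= s b p <= 1) ->
  0 <= g <= 1 -> 0 <= c <= 1 ->
  bern_expect a (fun b => s b g - s b c) <= 4 * `|a - g|.
Proof.
move=> hcons hs hg hc.
rewrite (bern_expect_shift a g) /=.
have cons_g : bern_expect g (fun b => s b g - s b c) <= 0.
  by have := hcons g c hg hc; rewrite /bern_expect; lra.
have slope : `|s true g - s true c - (s false g - s false c)| <= 4.
  move: (hs true g hg) (hs false g hg) (hs true c hc) (hs false c hc).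
  move=> /andP[? ?] /andP[? ?] /andP[? ?] /andP[? ?].
  by rewrite ler_norml; apply/andP; split; lra.
have : (a - g) * (s true g - s true c - (s false g - s false c)) <= `|a - g| * 4.
  by apply: le_trans (ler_norm _) _; rewrite normrM ler_wpM2l.
lra.
Qed.

Lemma sum_bool_fun_bern_expect (R : fieldType) (I : finType) (A : {pred I})
    (y : I -> bool) (f : bool -> R) :
  #|A|%:R != 0 :> R ->
  \sum_(t in A) f (y t) =
    #|A|%:R * bern_expect ((\sum_(t in A) (y t)%:R) / #|A|%:R) f.
Proof.
move=> hA.
have -> : \sum_(t in A) f (y t)
          = \sum_(t in A) ((1 - (y t)%:R) * f false + (y t)%:R * f true).
  by apply: eq_bigr => t _; case: (y t) => /=; ring.
rewrite big_split /= -!mulr_suml sumrB sumr_const /bern_expect.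
by field.
Qed.

Lemma sum_by_values (R : eqType) (V : nmodType) (n : nat) (v : 'I_n -> R)
    (F : 'I_n -> V) :
  \sum_(t < n) F t = \sum_(g <- values_of v) \sum_(t in level_set v g) F t.
Proof.
have uv : uniq (values_of v) by apply: undup_uniq.
have inv t : v t \in values_of v.
  by rewrite mem_undup; apply: map_f; rewrite mem_enum.
rewrite (exchange_big_dep predT) //=; apply: eq_bigr => t _.
rewrite -big_filter.
under eq_filter => g do rewrite /level_set inE eq_sym.
by rewrite (filter_pred1_uniq uv (inv t)) big_seq1.
Qed.

Lemma level_set_card_gt0 (R : eqType) (n : nat) (v : 'I_n -> R) (g : R) :
  g \in values_of v -> (0 < #|level_set v g|)%N.
Proof.
rewrite mem_undup => /mapP[t _ ->].
by rewrite card_gt0; apply/set0Pn; exists t; rewrite inE.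
Qed.

Theorem mainTheorem19 (R : realType) (n : nat)
  (y : 'I_n -> bool) (v : 'I_n -> R) (s : bool -> R -> R)
  (hv : forall t, 0 <= v t <= 1)
  (hs : forall (b : bool) (p : R), 0 <= p <= 1 -> -1 <= s b p <= 1)
  (hcons : consistent_mean s) :
  forall sigma : R -> R, (forall x, 0 <= x <= 1 -> 0 <= sigma x <= 1) ->
    \sum_(t < n) (s (y t) (v t) - s (y t) (sigma (v t)))
    <= 4 * \sum_(g <- values_of v)
             #|level_set v g|%:R *
             `| (\sum_(t in level_set v g) (y t)%:R) / #|level_set v g|%:R - g |.
Proof.
move=> sigma hsigma.
rewrite (sum_by_values v) mulr_sumr big_seq [X in _ <= X]big_seq.
apply: ler_sum => g /level_set_card_gt0 hT.
have [t0 hgt0] : exists t0, t0 \in level_set v g by apply/set0Pn; rewrite -card_gt0.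
have hg : 0 <= g <= 1 by move: hgt0; rewrite inE => /eqP <-; exact: hv.
rewrite (eq_bigr (fun t => s (y t) g - s (y t) (sigma g))); last first.
  by move=> t; rewrite inE => /eqP ->.
rewrite (sum_bool_fun_bern_expect y (fun b => s b g - s b (sigma g))); last first.
  by rewrite pnatr_eq0 -lt0n.
rewrite mulrCA ler_wpM2l ?ler0n //.
exact: consistent_regret_le (hsigma g hg).
Qed.
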